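(* For rational $\delta>0$ let $e(\delta)$ be the least integer $e$ with $2^{-e}<\delta$, and let $g(m,\delta)=(m-1)e(\delta)+\frac{(m-1)m}{2}$. Define $\bar g(x,k,0)=x+k+1$ and $\bar g(x,k,i+1)=g(\bar g(x,k,i),1/k)$. Then for each $i\in\mathbb{N}$: (i) $\bar g(x,k,i)\le (x+k+i+1)^{2^i}$ whenever $x\ge k>0$; (ii) for every $k\ge1$ and every nonempty finite $X\subseteq\mathbb{N}$, if $|X|>\bar g(\min X,k,i)$ then $X$ is $(\omega,k,i)$-persistent.
   Context: Strings are finite binary strings with $\preceq$ the initial-segment order; $2^i$ also denotes the set of strings of length $i$; a tree is a set of strings closed under initial segments; a leaf of a finite tree is a $\preceq$-maximal element. For finite $X=\{x_0<\dots<x_n\}$, a finite tree $T$ is $X$-quasistrong if $T\cap 2^{x_i}\ne\emptyset$ for all $i\le n$ and for each $i<n$ every $\sigma\in T\cap2^{x_i}$ has exactly two incompatible extensions in $T\cap 2^{x_{i+1}}$. $X$ is $\omega$-large if $|X|>\min X$. Persistence with $\alpha=\omega$: for $k\ge1$ and nonempty finite $X$, $X$ is $(\omega,k,0)$-persistent iff $X$ is $\omega$-large; for $i\ge1$, $X$ is $(\omega,k,i)$-persistent iff $X$ contains an $(\omega,k,i-1)$-persistent subset $Y$ such that for every $X$-quasistrong tree $T$ and every coloring $C:T\cap 2^{\max X}\to k$ there exist $c<k$ and a $Y$-quasistrong finite tree $S\subseteq T$ such that every leaf of $S$ has an extension in $C^{-1}(c)$. *)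

From HB Require Import structures.
From mathcomp Require Import all_boot all_order all_algebra.
From mathcomp Require Import finmap.
Set Implicit Arguments. Unset Strict Implicit. Unset Printing Implicit Defensive.
Import Order.TTheory GRing.Theory Num.Theory.
Local Open Scope fset_scope.

(* e(1/k): least integer e with 2^{-e} < 1/k.  For k >= 1 this least integer is
   >= 1 (2^{-e} >= 1 >= 1/k for e <= 0), and e = k works, so a search over
   0..k is exhaustive.  Only the instances delta = 1/k are ever used. *)
Definition e_inv (k : nat) : nat :=
  find (fun e : nat => ((2%:Q) ^- e < (k%:Q)^-1)%R) (iota 0 k.+1).

(* g(m, 1/k) = (m-1) e(1/k) + (m-1)m/2  (m >= 1 in all uses; (m-1)m is even) *)
Definition g (m k : nat) : nat := m.-1 * e_inv k + (m.-1 * m) %/ 2.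

Fixpoint gbar (x k i : nat) : nat :=
  match i with
  | 0 => x + k + 1
  | i'.+1 => g (gbar x k i') k
  end.

(* binary strings = seq bool; sigma <= tau (initial segment) = prefix sigma tau *)

Definition incompatible (s t : seq bool) : bool :=
  ~~ prefix s t && ~~ prefix t s.

Definition is_tree (T : {fset (seq bool)}) : Prop :=
  forall s, s \in T -> forall t, prefix t s -> t \in T.

Definition is_leaf (S : {fset (seq bool)}) (s : seq bool) : Prop :=
  s \in S /\ forall t, t \in S -> prefix s t -> t = s.

Definition sortX (X : {fset nat}) : seq nat := sort leq X.
Definition minX (X : {fset nat}) : nat := head 0 (sortX X).
Definition maxX (X : {fset nat}) : nat := last 0 (sortX X).

Definition quasistrong (X : {fset nat}) (T : {fset (seq bool)}) : Prop :=
  is_tree T /\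
  (forall i, i < size (sortX X) ->
     exists s, s \in T /\ size s = nth 0 (sortX X) i) /\
  (forall i, i.+1 < size (sortX X) ->
     forall s, s \in T -> size s = nth 0 (sortX X) i ->
       exists t1 t2,
         [/\ t1 \in T, t2 \in T,
             size t1 = nth 0 (sortX X) i.+1, size t2 = nth 0 (sortX X) i.+1 &
             [/\ prefix s t1, prefix s t2, incompatible t1 t2 &
                 forall t, t \in T -> size t = nth 0 (sortX X) i.+1 ->
                   prefix s t -> t = t1 \/ t = t2]]).

Definition omega_large (X : {fset nat}) : Prop := minX X < #|` X|.

(* (omega,k,i)-persistence; colorings C : T \cap 2^{max X} -> k are represented
   by total maps seq bool -> 'I_k (only values on T \cap 2^{max X} matter). *)
Fixpoint persistent (k i : nat) (X : {fset nat}) : Prop :=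
  match i with
  | 0 => X != fset0 /\ omega_large X
  | i'.+1 =>
      X != fset0 /\
      exists Y : {fset nat}, Y `<=` X /\ persistent k i' Y /\
        forall T : {fset (seq bool)}, quasistrong X T ->
        forall C : seq bool -> 'I_k,
        exists (c : 'I_k) (S : {fset (seq bool)}),
          [/\ S `<=` T, quasistrong Y S &
              forall s, is_leaf S s ->
                exists t, [/\ t \in T, size t = maxX X, prefix s t & C t = c]]
  end.

(* Part (i) is a direct induction, since g(A, 1/k) <= A^2 as soon as A >= 2k.

   Part (ii) holds with the smaller threshold iter i (thin_index e) (min X), where e = e(1/k),
   so that k < 2^e.  Write X = {x_0 < ... < x_n}, let M be the threshold for i - 1 and
   Y = {x_(t_0) < ... < x_(t_M)} with t_j = thin_index e j = j e + j(j+1)/2.  An X-quasistrong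
   tree T contains a copy of the full binary tree of height n whose level a lies at height x_a,
   so a colouring of T at height x_n becomes a colouring of the words of length n, in which some
   colour c has density at least 2^-e.  Into the words of length at most n we embed the binary
   tree of height M, sending level j to length t_j while keeping the density of c below a node
   of level j at least 2^-(e+j): the 2^(e+j+1) extensions of such a node to length t_(j+1) have
   average density at least 2^-(e+j), so two of them have density at least 2^-(e+j+1).  The
   prefix closure of the composite embedding is a Y-quasistrong subtree of T all of whose
   leaves extend to nodes of colour c; as Y has M + 1 elements and min Y = min X, induction
   on i applies to Y. *)

From HB Require Import structures.
From mathcomp Require Import all_boot all_order all_algebra.
From mathcomp Require Import finmap zify.
Set Implicit Arguments. Unset Strict Implicit. Unset Printing Implicit Defensive.
Import GRing.Theory Num.Theory.

(** * Bounds *)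

Lemma e_inv_bounds k : 0 < k -> [/\ 0 < e_inv k, e_inv k <= k & k < 2 ^ e_inv k].
Proof.
move=> k_gt0.
have small_iff e : ((2%:Q) ^- e < (k%:Q)^-1)%R = (k < 2 ^ e).
  by rewrite ltf_pV2 ?posrE ?exprn_gt0 ?ltr0n // -natrX ltr_nat.
have has_k : has (fun e => ((2%:Q) ^- e < (k%:Q)^-1)%R) (iota 0 k.+1).
  by apply/hasP; exists k; rewrite ?mem_iota //= small_iff ltn_expl.
have e_lt : e_inv k < k.+1 by rewrite -(size_iota 0 k.+1) -has_find.
have := nth_find 0 has_k; rewrite -/(e_inv k) nth_iota // add0n small_iff => k_lt.
by split=> //; rewrite lt0n; apply: contraTneq k_lt => ->; rewrite -leqNgt.
Qed.

Lemma leq_g k : {homo g^~ k : a b / a <= b}.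
Proof. by move=> a b ab; rewrite /g leq_add ?leq_div2r ?leq_mul // -!subn1 leq_sub2r. Qed.

Lemma g_le_sqr k A : 0 < k -> 2 * k <= A -> g A k <= A ^ 2.
Proof.
move=> k_gt0 kA; have [_ e_le _] := e_inv_bounds k_gt0.
have half := leq_trunc_div (A.-1 * A) 2.
have e2 : A.-1 * e_inv k * 2 <= A.-1 * A.
  by rewrite -mulnA leq_mul2l (leq_trans _ kA) ?orbT // mulnC leq_mul2l e_le orbT.
have : A.-1 * A <= A ^ 2 by rewrite expnSr expn1 leq_mul2r leq_pred orbT.
rewrite /g; lia.
Qed.

Lemma gbar_le_pow i x k : 0 < k -> k <= x -> gbar x k i <= (x + k + i + 1) ^ (2 ^ i).
Proof.
move=> k_gt0 kx; elim: i => [|i IH] /=; first by rewrite expn1 addn0.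
set B := x + k + i + 1 in IH *.
have B_le : B <= B ^ (2 ^ i) by rewrite -{1}(expn1 B) leq_pexp2l ?expn_gt0 // /B addn1.
apply: leq_trans (leq_g k IH) _; apply: leq_trans (g_le_sqr k_gt0 _) _; first lia.
by rewrite -expnM -expnSr leq_exp2r ?expn_gt0 // /B; lia.
Qed.

Fixpoint thin_index (e j : nat) : nat :=
  if j is j'.+1 then thin_index e j' + e + j else 0.

Lemma thin_index_g k M : thin_index (e_inv k) M = g M.+1 k.
Proof.
elim: M => [|M IH] /=; first by rewrite /g mul0n div0n.
rewrite IH /g /=.
have -> : M.+1 * M.+2 = M.+1 * 2 + M * M.+1 by lia.
by rewrite divnMDl //; lia.
Qed.

Lemma thin_index_increasing e : {homo thin_index e : a b / a < b}.
Proof.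
by apply: homo_ltn => [y x z|j]; [exact: ltn_trans | rewrite /= -addnA !addnS ltnS leq_addr].
Qed.

Lemma iter_thin_index_lt_gbar x k i : 0 < k ->
  (iter i (thin_index (e_inv k)) x).+1 < gbar x k i.
Proof.
move=> k_gt0; have [e_gt0 _ _] := e_inv_bounds k_gt0.
elim: i => [|i IH] /=; first lia.
by apply: leq_trans (leq_g k IH); rewrite -!thin_index_g /=; lia.
Qed.

(** * Embeddings of binary trees *)

Lemma prefix_eq_size (T : eqType) (s t u : seq T) :
  prefix s u -> prefix t u -> size s = size t -> s = t.
Proof. by rewrite !prefixE => /eqP ps /eqP pt eq_st; rewrite -ps -pt eq_st. Qed.

Lemma take_rcons_size (T : Type) (s : seq T) x : take (size s) (rcons s x) = s.
Proof. by rewrite -cats1 take_size_cat. Qed.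

Lemma incompatible_neq s t : incompatible s t -> s != t.
Proof. by case/andP => nst _; apply: contraNneq nst => ->; rewrite prefix_refl. Qed.

Lemma neq_incompatible s t : size s = size t -> s != t -> incompatible s t.
Proof.
move=> eq_st neq_st; apply/andP; split; apply: contra neq_st => st; apply/eqP.
  exact: prefix_eq_size st (prefix_refl t) eq_st.
exact: prefix_eq_size (prefix_refl s) st eq_st.
Qed.

Lemma size_gt1_of_mem_neq (T : eqType) (s : seq T) x y :
  x \in s -> y \in s -> x != y -> 1 < size s.
Proof.
move=> xs ys; apply: contraNT; rewrite -leqNgt.
case: s xs ys => [|z [|? ?]] //=; rewrite !inE => /eqP -> /eqP ->.
by rewrite eqxx.
Qed.

Definition prefixes (T : Type) (s : seq T) : seq (seq T) :=
  [seq take l s | l <- iota 0 (size s).+1].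

Lemma mem_prefixes (T : eqType) (s t : seq T) : (t \in prefixes s) = prefix t s.
Proof.
apply/mapP/idP => [[l _ ->]|ts]; first exact: prefix_take.
exists (size t); first by rewrite mem_iota ltnS size_prefix.
by apply/esym/eqP; rewrite -prefixE.
Qed.

Definition words (n : nat) : seq (seq bool) := [seq val t | t <- enum {: n.-tuple bool}].

Lemma mem_words n w : (w \in words n) = (size w == n).
Proof.
apply/mapP/eqP => [[t _ ->]|sw]; first exact: size_tuple.
by exists (Tuple (introT eqP sw)); rewrite ?mem_enum.
Qed.

Lemma uniq_words n : uniq (words n).
Proof. by rewrite map_inj_uniq ?enum_uniq //; apply: val_inj. Qed.

Definition tree_embedding (n : nat) (L : nat -> nat) (F : seq bool -> seq bool) : Prop :=
  forall w, size w <= n ->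
  [/\ size (F w) = L (size w),
      forall a, a <= size w -> prefix (F (take a w)) (F w) &
      forall w', size w' = size w -> F w' = F w -> w' = w].

Section BinaryEmbedding.

Variables (cand : seq bool -> nat -> seq (seq bool)) (root : seq bool).

Fixpoint embed_from (v : seq bool) (a : nat) (w : seq bool) : seq bool :=
  if w is b :: w' then embed_from (nth [::] (cand v a) b) a.+1 w' else v.

Definition embed : seq bool -> seq bool := embed_from root 0.

Lemma embed_rcons w b : embed (rcons w b) = nth [::] (cand (embed w) (size w)) b.
Proof.
rewrite /embed -[size w]add0n; elim: w root 0 => [|b' w IH] v a /=.
  by rewrite addn0.
by rewrite IH addSnnS.
Qed.

Variables (n : nat) (L : nat -> nat) (P : nat -> seq bool -> Prop).
Hypothesis P_root : P 0 root.
Hypothesis P_size : forall a v, P a v -> size v = L a.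
Hypothesis cand_split : forall a v, a < n -> P a v ->
  [/\ uniq (cand v a), 1 < size (cand v a) &
      forall t, t \in cand v a -> P a.+1 t /\ prefix v t].

Let child_spec w (b : bool) : size w < n -> P (size w) (embed w) ->
  P (size w).+1 (embed (rcons w b)) /\ prefix (embed w) (embed (rcons w b)).
Proof.
move=> lt_wn Pw; have [_ size_cand cand_P] := cand_split lt_wn Pw.
by rewrite embed_rcons; apply/cand_P/mem_nth; case: b; rewrite // ltnW.
Qed.

Lemma embed_invariant w : size w <= n -> P (size w) (embed w).
Proof.
elim/last_ind: w => [//|w b IH]; rewrite size_rcons => lt_wn.
by case: (child_spec b lt_wn (IH (ltnW lt_wn))).
Qed.

Lemma embed_prefix w a : size w <= n -> a <= size w -> prefix (embed (take a w)) (embed w).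
Proof.
elim/last_ind: w a => [|w b IH] a; first by move=> *; exact: prefix_refl.
rewrite size_rcons => lt_wn; rewrite leq_eqVlt => /predU1P[->|lt_aw].
  by rewrite -(size_rcons w b) take_size prefix_refl.
rewrite -cats1 takel_cat // cats1; apply: prefix_trans (IH a (ltnW lt_wn) lt_aw) _.
exact: (child_spec b lt_wn (embed_invariant (ltnW lt_wn))).2.
Qed.

Lemma embed_inj w w' : size w <= n -> size w' = size w -> embed w' = embed w -> w' = w.
Proof.
elim/last_ind: w w' => [|w b IH] w'; first by move=> _ /size0nil.
rewrite size_rcons => lt_wn; have Pw := embed_invariant (ltnW lt_wn).
case/lastP: w' => [|w' b']; rewrite ?size_rcons // => -[= eq_size].
have lt_w'n : size w' < n by rewrite eq_size.
have Pw' := embed_invariant (ltnW lt_w'n).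
have [_ pre] := child_spec b lt_wn Pw.
have [_ pre'] := child_spec b' lt_w'n Pw'.
have eq_esize : size (embed w') = size (embed w) by rewrite (P_size Pw') (P_size Pw) eq_size.
move=> eq_emb; have ew : w' = w.
  by apply: IH (ltnW lt_wn) eq_size _; apply: prefix_eq_size pre' _ eq_esize; rewrite eq_emb.
move: eq_emb; rewrite ew !embed_rcons; have [uniq_c size_c _] := cand_split lt_wn Pw.
move/eqP; rewrite nth_uniq ?(leq_trans _ size_c) ?ltnS ?leq_b1 // => /eqP.
by case: b b' {pre pre'} => -[].
Qed.

Lemma embed_tree_embedding : tree_embedding n L embed.
Proof.
move=> w le_wn; split; first exact: P_size (embed_invariant le_wn).
  by move=> a; apply: embed_prefix.
by move=> w'; apply: embed_inj.
Qed.

End BinaryEmbedding.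

Lemma tree_embedding_comp m n L1 L2 F1 F2 :
  {homo L1 : a b / a <= b} -> L1 m <= n ->
  tree_embedding m L1 F1 -> tree_embedding n L2 F2 ->
  tree_embedding m (L2 \o L1) (F2 \o F1).
Proof.
move=> L1_mono L1m emb1 emb2 w le_wm; have [size1 pre1 inj1] := emb1 w le_wm.
have le_F1n : size (F1 w) <= n by rewrite size1 (leq_trans (L1_mono _ _ le_wm)).
have [size2 pre2 inj2] := emb2 _ le_F1n; split.
- by rewrite /= size2 size1.
- move=> a le_aw /=; have size_wa := size_takel le_aw.
  have [size1a _ _] := emb1 (take a w) (leq_trans (eq_leq size_wa) (leq_trans le_aw le_wm)).
  have -> : F1 (take a w) = take (L1 a) (F1 w).
    by rewrite -{2}size_wa -size1a; apply/esym/eqP; rewrite -prefixE pre1.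
  by apply: pre2; rewrite size1 L1_mono.
- move=> w' eq_size /= /inj2 eq_F1.
  have [size1' _ _] := emb1 w' (leq_trans (eq_leq eq_size) le_wm).
  rewrite eq_size in size1'.
  by apply: inj1 eq_size (eq_F1 _); rewrite size1' ?size1.
Qed.

Lemma eq_tree_embedding n L L' F : (forall j, j <= n -> L j = L' j) ->
  tree_embedding n L F -> tree_embedding n L' F.
Proof. by move=> eqL F_emb w le_wn; rewrite -eqL //; apply: F_emb. Qed.

Definition image_closure (M : nat) (F : seq bool -> seq bool) : {fset (seq bool)} :=
  seq_fset tt (flatten [seq prefixes (F w) | w <- words M]).

Lemma mem_image_closure M F t :
  reflect (exists2 w, size w = M & prefix t (F w)) (t \in image_closure M F).
Proof.
rewrite seq_fsetE; apply: (iffP flattenP) => [[_ /mapP[w wM ->]]|[w wM tw]].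
  by rewrite mem_prefixes mem_words in wM *; exists w => //; apply/eqP.
by exists (prefixes (F w)); [apply/mapP; exists w; rewrite ?mem_words ?wM | rewrite mem_prefixes].
Qed.

Section ImageClosure.

Variables (Y : {fset nat}) (M : nat) (F : seq bool -> seq bool).
Hypothesis size_Y : size (sortX Y) = M.+1.
Hypothesis F_emb : tree_embedding M (nth 0 (sortX Y)) F.

Local Notation S := (image_closure M F).

Lemma image_closure_tree : is_tree S.
Proof.
move=> s /mem_image_closure[w wM sw] t ts.
by apply/mem_image_closure; exists w => //; apply: prefix_trans sw.
Qed.

Lemma image_in_closure w : size w <= M -> F w \in S.
Proof.
move=> le_wM; set w' := w ++ nseq (M - size w) false.
have size_w' : size w' = M by rewrite size_cat size_nseq subnKC.
have [_ pre _] := F_emb (eq_leq size_w').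
apply/mem_image_closure; exists w' => //.
by have := pre (size w); rewrite take_size_cat // size_cat leq_addr; apply.
Qed.

Lemma image_closure_level s i : s \in S -> i <= M ->
  size s = nth 0 (sortX Y) i -> exists2 w, size w = i & s = F w.
Proof.
move=> /mem_image_closure[w wM sw] le_iM size_s.
have size_wi : size (take i w) = i by rewrite size_takel ?wM.
have [_ pre _] := F_emb (eq_leq wM).
have := F_emb (w := take i w); rewrite size_wi => /(_ le_iM) [size_Fi _ _].
exists (take i w) => //; apply: prefix_eq_size sw (pre i _) _; first by rewrite wM.
by rewrite size_s size_Fi.
Qed.

Lemma image_closure_leaf s : is_leaf S s -> exists2 w, size w = M & s = F w.
Proof.
case=> /mem_image_closure[w wM sw] s_max; exists w => //.
by apply/esym/s_max => //; apply: image_in_closure; rewrite wM.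
Qed.

Lemma image_closure_child w b : size w < M ->
  [/\ F (rcons w b) \in S, size (F (rcons w b)) = nth 0 (sortX Y) (size w).+1
    & prefix (F w) (F (rcons w b))].
Proof.
move=> lt_wM; have le_wbM : size (rcons w b) <= M by rewrite size_rcons.
have [size_F pre _] := F_emb le_wbM.
rewrite image_in_closure // size_F size_rcons; split=> //.
by have := pre (size w); rewrite take_rcons_size size_rcons; apply.
Qed.

Lemma image_closure_children_neq w : size w < M -> F (rcons w false) != F (rcons w true).
Proof.
move=> lt_wM; have le_wM : size (rcons w true) <= M by rewrite size_rcons.
have [_ _ inj] := F_emb le_wM.
apply/eqP=> /inj; rewrite !size_rcons => /(_ erefl) /(congr1 (last false)).
by rewrite !last_rcons.
Qed.

Lemma image_closure_child_unique w t : size w < M -> t \in S ->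
  size t = nth 0 (sortX Y) (size w).+1 -> prefix (F w) t ->
  t = F (rcons w false) \/ t = F (rcons w true).
Proof.
move=> lt_wM tS size_t; have [w2 size_w2 ->] := image_closure_level tS lt_wM size_t.
case/lastP: w2 size_w2 => [|w' b]; rewrite ?size_rcons // => -[= size_w'] pre_t.
have lt_w'M : size w' < M by rewrite size_w'.
have [_ _ pre_w'] := image_closure_child b lt_w'M.
have [size_Fw _ inj] := F_emb (ltnW lt_wM).
have [size_Fw' _ _] := F_emb (ltnW lt_w'M).
have -> : w' = w.
  apply: inj => //; apply: prefix_eq_size pre_w' pre_t _.
  by rewrite size_Fw' size_Fw size_w'.
by case: b {pre_w' pre_t}; [right | left].
Qed.

Lemma quasistrong_image_closure : quasistrong Y S.
Proof.
split; first exact: image_closure_tree.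
rewrite size_Y; split.
  move=> i lt_iM; have le_iM : size (nseq i false) <= M by rewrite size_nseq.
  have [size_F _ _] := F_emb le_iM.
  by exists (F (nseq i false)); rewrite image_in_closure // size_F size_nseq.
move=> i; rewrite ltnS => lt_iM s sS size_s.
have [w size_w ->] := image_closure_level sS (ltnW lt_iM) size_s.
rewrite -size_w in lt_iM *.
have [inS0 size0 pre0] := image_closure_child false lt_iM.
have [inS1 size1 pre1] := image_closure_child true lt_iM.
exists (F (rcons w false)), (F (rcons w true)); split=> //; split=> //.
  by apply: neq_incompatible; [rewrite size0 size1 | exact: image_closure_children_neq].
by move=> t; apply: image_closure_child_unique.
Qed.

Lemma image_closure_sub (T : {fset (seq bool)}) :
  is_tree T -> (forall w, size w = M -> F w \in T) -> (image_closure M F `<=` T)%fset.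
Proof.
move=> T_tree F_T; apply/fsubsetP => t /mem_image_closure[w wM tw].
exact: T_tree (F_T w wM) t tw.
Qed.

End ImageClosure.

Lemma sortX_sorted X : sorted ltn (sortX X).
Proof. by rewrite ltn_sorted_uniq_leq sort_uniq fset_uniq (sort_sorted leq_total). Qed.

Lemma mem_sortX X x : (x \in sortX X) = (x \in X).
Proof. exact: mem_sort. Qed.

Lemma size_sortX X : size (sortX X) = #|` X|.
Proof. exact: size_sort. Qed.

Lemma sortX_seq_fset (s : seq nat) : sorted ltn s -> sortX (seq_fset tt s) = s.
Proof.
move=> s_sorted; have := s_sorted; rewrite ltn_sorted_uniq_leq => /andP[s_uniq s_leq].
have perm_s : perm_eq (enum_fset (seq_fset tt s)) s.
  by have := seq_fset_perm tt s; rewrite undup_id.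
rewrite /sortX (perm_sortP leq_total leq_trans anti_leq _ _ perm_s).
exact: (sorted_sort leq_trans s_leq).
Qed.

Definition subfset_at (X : {fset nat}) (f : nat -> nat) (M : nat) : {fset nat} :=
  seq_fset tt [seq nth 0 (sortX X) (f j) | j <- iota 0 M.+1].

Section SubfsetAt.

Variables (X : {fset nat}) (f : nat -> nat) (M : nat).
Hypothesis f_increasing : {homo f : a b / a < b}.
Hypothesis fM_lt : f M < #|` X|.

Lemma sortX_subfset_at :
  sortX (subfset_at X f M) = [seq nth 0 (sortX X) (f j) | j <- iota 0 M.+1].
Proof.
apply/sortX_seq_fset/(homo_sorted_in (P := fun j => j <= M)); last exact: iota_ltn_sorted.
  move=> i j /= le_iM le_jM lt_ij.
  have lt_fj : f j < size (sortX X).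
    by rewrite size_sortX (leq_ltn_trans _ fM_lt) // (ltnW_homo f_increasing).
  apply: (sorted_ltn_nth ltn_trans 0 (sortX_sorted X)); rewrite ?inE ?f_increasing //.
  exact: ltn_trans (f_increasing lt_ij) lt_fj.
by apply/allP => j; rewrite mem_iota.
Qed.

Lemma size_sortX_subfset_at : size (sortX (subfset_at X f M)) = M.+1.
Proof. by rewrite sortX_subfset_at size_map size_iota. Qed.

Lemma nth_sortX_subfset_at j : j <= M ->
  nth 0 (sortX (subfset_at X f M)) j = nth 0 (sortX X) (f j).
Proof. by move=> le_jM; rewrite sortX_subfset_at (nth_map 0) ?size_iota // nth_iota. Qed.

Lemma subfset_at_sub : (subfset_at X f M `<=` X)%fset.
Proof.
apply/fsubsetP => y; rewrite seq_fsetE => /mapP[j]; rewrite mem_iota /= => le_jM ->.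
rewrite -mem_sortX mem_nth // size_sortX (leq_ltn_trans _ fM_lt) //.
exact: (ltnW_homo f_increasing).
Qed.

Lemma minX_subfset_at : f 0 = 0 -> minX (subfset_at X f M) = minX X.
Proof. by move=> f0; rewrite /minX sortX_subfset_at /= f0 -nth0. Qed.

End SubfsetAt.

Lemma quasistrong_binary_embedding X T n : size (sortX X) = n.+1 -> quasistrong X T ->
  exists2 phi, tree_embedding n (nth 0 (sortX X)) phi & forall w, size w <= n -> phi w \in T.
Proof.
set xs := sortX X => size_xs [T_tree [T_levels T_split]].
pose level a := [seq t <- enum_fset T | size t == nth 0 xs a].
pose cand v a := [seq t <- level a.+1 | prefix v t].
pose P a v := v \in T /\ size v = nth 0 xs a.
have P_root : P 0 (nth [::] (level 0) 0).
  have [s [sT size_s]] := T_levels 0 (leq_trans (ltn0Sn n) (eq_leq (esym size_xs))).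
  have : nth [::] (level 0) 0 \in level 0.
    by apply/mem_nth; rewrite -has_predT; apply/hasP; exists s; rewrite ?mem_filter ?size_s ?eqxx.
  by rewrite mem_filter => /andP[/eqP].
have cand_split a v : a < n -> P a v ->
    [/\ uniq (cand v a), 1 < size (cand v a) & forall t, t \in cand v a -> P a.+1 t /\ prefix v t].
  move=> lt_an [vT size_v]; split.
  - by rewrite !filter_uniq ?fset_uniq.
  - have lt_a1 : a.+1 < size xs by rewrite size_xs.
    have [t1 [t2 [t1T t2T size1 size2 [pre1 pre2 inc _]]]] := T_split a lt_a1 v vT size_v.
    apply: (size_gt1_of_mem_neq _ _ (incompatible_neq inc));
      by rewrite !mem_filter ?pre1 ?pre2 ?size1 ?size2 ?eqxx.
  - by move=> t; rewrite !mem_filter => /andP[pre /andP[/eqP size_t tT]].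
have P_size a v : P a v -> size v = nth 0 xs a by case.
exists (embed cand (nth [::] (level 0) 0)).
  exact: embed_tree_embedding P_root P_size cand_split.
by move=> w /(embed_invariant P_root cand_split) [].
Qed.

(** * Colourings and density *)

Section Coloring.

Variables (k : nat) (chi : seq bool -> 'I_k).

(* The number of words u of length D with chi (v ++ u) = c. *)
Fixpoint ncolored (c : 'I_k) (v : seq bool) (D : nat) : nat :=
  if D is D'.+1 then ncolored c (rcons v false) D' + ncolored c (rcons v true) D'
  else chi v == c.

Lemma ncolored_le c v D : ncolored c v D <= 2 ^ D.
Proof.
elim: D v => [|D IH] v /=; first by rewrite leq_b1.
by rewrite expnS mul2n -addnn leq_add.
Qed.

Lemma sum_ncolored v D : \sum_(c < k) ncolored c v D = 2 ^ D.
Proof.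
elim: D v => [|D IH] v /=; last by rewrite big_split /= !IH expnS mul2n -addnn.
rewrite (bigD1 (chi v)) //= eqxx big1 // => c.
by rewrite eq_sym => /negbTE ->.
Qed.

Lemma ncolored_gt0 c v D : 0 < ncolored c v D -> exists2 u, size u = D & chi (v ++ u) = c.
Proof.
elim: D v => [|D IH] v /=; first by rewrite lt0b => /eqP chi_v; exists [::]; rewrite ?cats0.
rewrite addn_gt0 => /orP[] /IH[u size_u chi_u].
  by exists (false :: u); rewrite /= ?size_u // -cat_rcons.
by exists (true :: u); rewrite /= ?size_u // -cat_rcons.
Qed.

Lemma ncolored_ext c D q t g v : t * 2 ^ g <= ncolored c v (g + D) * q ->
  exists2 u, size u = g & t <= ncolored c (v ++ u) D * q.
Proof.
elim: g v => [|g IH] v /=; first by rewrite muln1 => ?; exists [::]; rewrite ?cats0.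
rewrite expnS mulnCA mul2n -addnn mulnDl => le_sum.
have [|] : t * 2 ^ g <= ncolored c (rcons v false) (g + D) * q \/
           t * 2 ^ g <= ncolored c (rcons v true) (g + D) * q by lia.
  by case/IH => u size_u; exists (false :: u); rewrite /= ?size_u // -cat_rcons.
by case/IH => u size_u; exists (true :: u); rewrite /= ?size_u // -cat_rcons.
Qed.

(* A single extension contributes at most 2 ^ D * q, so the excess forces a second one. *)
Lemma ncolored_ext2 c D q t g v : 0 < t -> 2 ^ D * q + 2 ^ g * t <= ncolored c v (g + D) * q ->
  exists u1 u2, [/\ size u1 = g, size u2 = g, u1 != u2,
    t <= ncolored c (v ++ u1) D * q & t <= ncolored c (v ++ u2) D * q].
Proof.
move=> t_gt0; elim: g v => [|g IH] v /=.
  by rewrite mul1n => /leq_trans/(_ (leq_mul (ncolored_le c v D) (leqnn q))); lia.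
rewrite expnS -mulnA mul2n -addnn mulnDl => le_sum.
set a := ncolored c (rcons v false) (g + D) in le_sum.
set b := ncolored c (rcons v true) (g + D) in le_sum.
have [/IH[u1 [u2 [size1 size2 neq12 le1 le2]]]|lt_a] := leqP (2 ^ D * q + 2 ^ g * t) (a * q).
  exists (false :: u1), (false :: u2); rewrite -!cat_rcons /= size1 size2 eqseq_cons.
  by split.
have [/IH[u1 [u2 [size1 size2 neq12 le1 le2]]]|lt_b] := leqP (2 ^ D * q + 2 ^ g * t) (b * q).
  exists (true :: u1), (true :: u2); rewrite -!cat_rcons /= size1 size2 eqseq_cons.
  by split.
have [|u1 size1 le1] := @ncolored_ext c D q t g (rcons v false); first by rewrite -/a; lia.
have [|u2 size2 le2] := @ncolored_ext c D q t g (rcons v true); first by rewrite -/b; lia.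
by exists (false :: u1), (true :: u2); rewrite -!cat_rcons /= size1 size2.
Qed.

Lemma ncolored_dense_split c v R D :
  2 ^ (R.+1 + D) <= ncolored c v (R.+1 + D) * 2 ^ R ->
  exists u1 u2, [/\ size u1 = R.+1, size u2 = R.+1, u1 != u2,
    2 ^ D <= ncolored c (v ++ u1) D * 2 ^ R.+1 & 2 ^ D <= ncolored c (v ++ u2) D * 2 ^ R.+1].
Proof.
move=> dense_v; apply: ncolored_ext2; first exact: expn_gt0.
by move: dense_v; rewrite expnD !expnS; lia.
Qed.

Lemma exists_dense_color n : 0 < k -> exists c, 2 ^ n <= ncolored c [::] n * 2 ^ e_inv k.
Proof.
move=> k_gt0; have [_ _ lt_k] := e_inv_bounds k_gt0.
have [c _ c_max] := @arg_maxnP _ (Ordinal k_gt0) predT (fun c => ncolored c [::] n) isT.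
exists c; rewrite -(sum_ncolored [::] n) mulnC (leq_trans _ (leq_mul (ltnW lt_k) (leqnn _))) //.
by rewrite -[k in k * _]card_ord -sum_nat_const; apply: leq_sum => j _; apply: c_max.
Qed.

End Coloring.

Lemma dense_embedding k (chi : seq bool -> 'I_k) n M :
  0 < k -> thin_index (e_inv k) M <= n ->
  exists c psi, tree_embedding M (thin_index (e_inv k)) psi /\
    forall w, size w = M -> exists2 u, size (psi w ++ u) = n & chi (psi w ++ u) = c.
Proof.
move=> k_gt0 le_Mn; set e := e_inv k in le_Mn *.
have [c dense_root] := exists_dense_color chi n k_gt0.
pose D i := n - thin_index e i.
(* Among the extensions of v to length n, the colour c has density at least 2^-(e+i). *)
pose dense i v := 2 ^ D i <= ncolored chi c v (D i) * 2 ^ (e + i).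
pose P i v := size v = thin_index e i /\ dense i v.
pose cand v i := [seq v ++ u | u <- words (e + i.+1) & dense i.+1 (v ++ u)].
have P_root : P 0 [::] by rewrite /P /dense /D subn0 addn0.
have P_size i v : P i v -> size v = thin_index e i by case.
have cand_split i v : i < M -> P i v ->
    [/\ uniq (cand v i), 1 < size (cand v i) & forall t, t \in cand v i -> P i.+1 t /\ prefix v t].
  move=> lt_iM [size_v dense_v].
  have D_split : D i = (e + i).+1 + D i.+1.
    have := leq_trans (ltnW_homo (thin_index_increasing e) lt_iM) le_Mn; rewrite /D /=; lia.
  split.
  - rewrite map_inj_uniq ?filter_uniq ?uniq_words // => u1 u2.
    by move=> /(congr1 (drop (size v))); rewrite !drop_size_cat.
  - move: dense_v; rewrite /dense D_split.
    move=> /ncolored_dense_split[u1 [u2 [size1 size2 neq12 dense1 dense2]]].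
    rewrite size_map; apply: (size_gt1_of_mem_neq _ _ neq12).
      by rewrite mem_filter mem_words size1 /dense addnS eqxx andbT.
    by rewrite mem_filter mem_words size2 /dense addnS eqxx andbT.
  - move=> t /mapP[u]; rewrite mem_filter mem_words => /andP[dense_u /eqP size_u] ->.
    by split; [split; rewrite // size_cat size_v size_u /= addnA | exact: prefix_prefix].
exists c, (embed cand [::]); split; first exact: embed_tree_embedding P_root P_size cand_split.
move=> w size_w; have [size_psi dense_psi] := embed_invariant P_root cand_split (eq_leq size_w).
rewrite size_w in size_psi dense_psi.
have [|u size_u chi_u] := @ncolored_gt0 _ chi c (embed cand [::] w) (D M).
  rewrite lt0n; apply: contraTneq dense_psi; rewrite /dense => ->.
  by rewrite mul0n -ltnNge expn_gt0.
by exists u; rewrite // size_cat size_psi size_u /D subnKC.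
Qed.

(** * Persistence *)

Lemma quasistrong_monochromatic_subtree k X M T (C : seq bool -> 'I_k) :
  0 < k -> thin_index (e_inv k) M < #|` X| -> quasistrong X T ->
  exists c (S : {fset (seq bool)}),
    [/\ (S `<=` T)%fset, quasistrong (subfset_at X (thin_index (e_inv k)) M) S &
        forall s, is_leaf S s -> exists t, [/\ t \in T, size t = maxX X, prefix s t & C t = c]].
Proof.
move=> k_gt0 lt_MX qT; have T_tree : is_tree T by case: qT.
set e := e_inv k in lt_MX *; set Y := subfset_at X (thin_index e) M.
have e_inc := thin_index_increasing e.
have size_xs : size (sortX X) = #|` X|.-1.+1.
  by rewrite prednK ?size_sortX // (leq_ltn_trans _ lt_MX).
set n := #|` X|.-1 in size_xs.
have le_Mn : thin_index e M <= n by rewrite -ltnS -size_xs size_sortX.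
have [phi phi_emb phi_T] := quasistrong_binary_embedding size_xs qT.
have [c [psi [psi_emb psi_leaf]]] := dense_embedding (C \o phi) k_gt0 le_Mn.
have F_emb : tree_embedding M (nth 0 (sortX Y)) (phi \o psi).
  apply: eq_tree_embedding (tree_embedding_comp (ltnW_homo e_inc) le_Mn psi_emb phi_emb).
  by move=> j le_jM; rewrite nth_sortX_subfset_at.
exists c, (image_closure M (phi \o psi)); split.
- apply: image_closure_sub => // w size_w; apply: phi_T.
  by have [-> _ _] := psi_emb w (eq_leq size_w); rewrite size_w.
- exact: quasistrong_image_closure (size_sortX_subfset_at e_inc lt_MX) F_emb.
move=> s /(image_closure_leaf F_emb)[w size_w ->]; have [u size_u C_u] := psi_leaf w size_w.
have [size_phi pre_phi _] := phi_emb _ (eq_leq size_u).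
exists (phi (psi w ++ u)); split=> //; first exact: phi_T (eq_leq size_u).
  by rewrite size_phi size_u /maxX -nth_last size_xs.
by have := pre_phi (size (psi w)); rewrite take_size_cat // size_cat leq_addr; apply.
Qed.

Lemma persistent_of_iter k i X : 0 < k -> X != fset0 ->
  iter i (thin_index (e_inv k)) (minX X) < #|` X| -> persistent k i X.
Proof.
elim: i X => [|i IH] X k_gt0 X_neq0 /= lt_X; first by split.
split=> //; set M := iter i _ (minX X) in lt_X.
have e_inc := thin_index_increasing (e_inv k).
have size_Y := size_sortX_subfset_at e_inc lt_X.
exists (subfset_at X (thin_index (e_inv k)) M); split; first exact: subfset_at_sub.
split; last by move=> T qT C; apply: quasistrong_monochromatic_subtree.
apply: IH => //; last by rewrite minX_subfset_at // -size_sortX size_Y.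
by apply/eqP => Y0; move: size_Y; rewrite Y0 size_sortX cardfs0.
Qed.

Local Open Scope fset_scope.

Theorem lemma2p7 :
  forall i : nat,
    (forall x k : nat, 0 < k -> k <= x ->
       gbar x k i <= (x + k + i + 1) ^ (2 ^ i)) /\
    (forall (k : nat) (X : {fset nat}), 1 <= k -> X != fset0 ->
       gbar (minX X) k i < #|` X| -> persistent k i X).
Proof.
move=> i; split=> [x k k_gt0 le_kx | k X k_gt0 X_neq0 lt_X]; first exact: gbar_le_pow.
apply: persistent_of_iter => //; apply: ltn_trans lt_X.
exact: ltnW (iter_thin_index_lt_gbar _ _ k_gt0).
Qed.
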